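(* Let $k,d\ge 1$ and $n\ge k$ be integers, and let $H=\sum_{1\le i_1<\cdots<i_k\le n} H_{i_1,\ldots,i_k}$ be an instance of the MAX-$k$-local Hamiltonian problem on $n$ qudits of dimension $d$, with optimal value $\mathrm{OPT}=\lambda_{\max}(H)$. Then there exists a pure product state $\lvert\phi\rangle=\lvert\phi_1\rangle\otimes\cdots\otimes\lvert\phi_n\rangle$, with each $\lvert\phi_i\rangle\in\mathbb{C}^d$ a unit vector, such that $\langle\phi\rvert H\lvert\phi\rangle\ge \mathrm{OPT}/d^{k-1}$.
   Context: MAX-$k$-local Hamiltonian on $d$-level systems (qudits): an instance on $n$ qudits (Hilbert space $(\mathbb{C}^d)^{\otimes n}$) consists of one Hermitian matrix $H_{i_1,\ldots,i_k}$ for each $k$-element subset $\{i_1,\ldots,i_k\}$ of the qudits; each $H_{i_1,\ldots,i_k}$ acts nontrivially only on those $k$ qudits (i.e. is a positive semidefinite operator on $(\mathbb{C}^d)^{\otimes k}$ of operator norm at most $1$, tensored with the identity on the other qudits). Put $H=\sum H_{i_1,\ldots,i_k}$. An assignment is any (pure or mixed) state $\rho$ on the $n$ qudits, with value $\mathrm{Tr}(H\rho)$; the optimal value $\mathrm{OPT}$ is the largest eigenvalue of $H$, i.e. the maximal value of an assignment. *)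

(* Complex scalars: an arbitrary numClosedFieldType C
   (e.g. algC, or R[i] for a real closed field R). *)
From HB Require Import structures.
From mathcomp Require Import all_boot all_order all_algebra.
Set Implicit Arguments. Unset Strict Implicit. Unset Printing Implicit Defensive.
Import Order.TTheory GRing.Theory Num.Theory.
Local Open Scope ring_scope.

Definition dotp (C : numClosedFieldType) (T : finType) (u v : T -> C) : C :=
  \sum_(x : T) (u x)^* * v x.

Definition applyop (C : numClosedFieldType) (T : finType)
  (A : T -> T -> C) (v : T -> C) : T -> C :=
  fun x => \sum_(y : T) A x y * v y.

Definition hermitian (C : numClosedFieldType) (T : finType) (A : T -> T -> C) :=
  forall x y, A y x = (A x y)^*.

Definition psd (C : numClosedFieldType) (T : finType) (A : T -> T -> C) :=
  hermitian A /\ forall v : T -> C, 0 <= dotp v (applyop A v).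

Definition opnorm_le1 (C : numClosedFieldType) (T : finType) (A : T -> T -> C) :=
  forall v : T -> C, dotp (applyop A v) (applyop A v) <= dotp v v.

Definition eigenvalue (C : numClosedFieldType) (T : finType)
  (A : T -> T -> C) (lam : C) :=
  exists v : T -> C, (exists x, v x != 0) /\ forall x, applyop A v x = lam * v x.

Definition is_lambda_max (C : numClosedFieldType) (T : finType)
  (A : T -> T -> C) (lam : C) :=
  eigenvalue A lam /\ forall mu, eigenvalue A mu -> mu <= lam.

(* Computational basis of n qudits of dimension d: configurations 'I_n -> 'I_d;
   (C^d)^{(x)n} has basis indexed by conf n d. *)
Definition conf (n d : nat) := {ffun 'I_n -> 'I_d}.

Definition lconf (n d : nat) (S : {set 'I_n}) := {ffun {i : 'I_n | i \in S} -> 'I_d}.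

Definition restrict (n d : nat) (S : {set 'I_n}) (x : conf n d) : lconf d S :=
  [ffun i : {i : 'I_n | i \in S} => x (val i)].

(* h (acting on the qudits of S) tensored with the identity on the others *)
Definition embed (C : numClosedFieldType) (n d : nat) (S : {set 'I_n})
  (h : lconf d S -> lconf d S -> C) : conf n d -> conf n d -> C :=
  fun x y => if [forall i, (i \notin S) ==> (x i == y i)]
             then h (restrict S x) (restrict S y) else 0.

Definition kham (C : numClosedFieldType) (n d k : nat)
  (h : forall S : {set 'I_n}, lconf d S -> lconf d S -> C) :
  conf n d -> conf n d -> C :=
  fun x y => \sum_(S : {set 'I_n} | #|S| == k) embed (h S) x y.

Definition prodstate (C : numClosedFieldType) (n d : nat)
  (phi : 'I_n -> 'I_d -> C) : conf n d -> C :=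
  fun x => \prod_(i : 'I_n) phi i (x i).

From Pilot Require Import Defs.
From HB Require Import structures.
From mathcomp Require Import all_boot all_order all_algebra.
From mathcomp Require Import ring.
From Stdlib Require Import FunctionalExtensionality.
Import Order.TTheory GRing.Theory Num.Theory.
Local Open Scope ring_scope.

(* Induct on a cut m between the sites 0..m-1, carrying unit vectors u_i, and
   the rest: for every v = u_0 (x) ... (x) u_(m-1) (x) w some product state
   phi satisfies
     sum_S d^-(|S /\ [m,n)| - 1) <v|H_S|v>  <=  <v|v> <phi|H|phi>.
   At m = n it holds with phi = u; at m = 0 with v an eigenvector of OPT it is
   the theorem.  To go from m + 1 back to m, expand site m of v in an
   orthonormal basis U_b diagonalising the reduced density matrix of w on that
   site: v = sum_b P_b v, and each P_b v again has the product form, one site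
   further.  A term H_S with m not in S commutes with every P_b; if m is the
   only site of S at or after m, its cross terms vanish since the w-parts of
   the P_b v are orthogonal; otherwise the pinching inequality loses a factor
   of at most d, exactly what the weight of S gains.  Summing the invariant
   for the P_b v and keeping the best phi closes the induction. *)

Lemma conjC_mulCl (C : numClosedFieldType) (a b : C) : (a^* * b)^* = a * b^*.
Proof. by rewrite rmorphM /= conjCK. Qed.

Lemma reindex_involutive {V : zmodType} {T : finType} (g : T -> T) (F : T -> V) :
  involutive g -> \sum_t F t = \sum_t F (g t).
Proof. by move=> hg; rewrite (reindex_inj (inv_inj hg)). Qed.

Section Configurations.
Variables (C : numClosedFieldType) (n d : nat).
Local Notation cf := (conf n d).

Definition upd (i0 : 'I_n) (x : cf) (a : 'I_d) : cf :=
  [ffun j => if j == i0 then a else x j].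

Lemma upd_same i0 x a : upd i0 x a i0 = a.
Proof. by rewrite ffunE eqxx. Qed.

Lemma upd_other i0 x a j : j != i0 -> upd i0 x a j = x j.
Proof. by rewrite ffunE => /negbTE ->. Qed.

Lemma upd_upd i0 x a b : upd i0 (upd i0 x a) b = upd i0 x b.
Proof. by apply/ffunP => j; rewrite !ffunE; case: (j == i0). Qed.

Lemma upd_id i0 x : upd i0 x (x i0) = x.
Proof. by apply/ffunP => j; rewrite !ffunE; case: eqP => // ->. Qed.

Lemma sum_upd_swap i0 (F : cf -> 'I_d -> C) :
  \sum_x \sum_a F x a = \sum_x \sum_a F (upd i0 x a) (x i0).
Proof.
rewrite !pair_bigA /= (reindex_involutive
  (fun p : cf * 'I_d => (upd i0 p.1 p.2, p.1 i0)) (fun p => F p.1 p.2)) //.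
by case=> x a /=; rewrite upd_upd upd_id upd_same.
Qed.

Variable S : {set 'I_n}.
Local Notation lc := (lconf d S).

Definition override (x : cf) (b : lc) : cf :=
  [ffun i => if (insub i : option {i : 'I_n | i \in S}) is Some j then b j else x i].

Lemma override_in x b i (hi : i \in S) : override x b i = b (exist _ i hi).
Proof. by rewrite ffunE (insubT (fun i => i \in S) hi). Qed.

Lemma override_out x b i : i \notin S -> override x b i = x i.
Proof. by move=> hi; rewrite ffunE insubF //; apply/negbTE. Qed.

Lemma restrict_override x b : restrict S (override x b) = b.
Proof.
apply/ffunP => [[i hi]]; rewrite ffunE /= override_in; congr (b _); exact: val_inj.
Qed.

Lemma override_override x a b : override (override x a) b = override x b.
Proof.
apply/ffunP => i; case: (boolP (i \in S)) => hi; last by rewrite !override_out.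
by rewrite !override_in.
Qed.

Lemma override_restrict x : override x (restrict S x) = x.
Proof.
apply/ffunP => i; case: (boolP (i \in S)) => hi; last by rewrite override_out.
by rewrite override_in ffunE.
Qed.

Lemma sum_override_swap (F : cf -> lc -> C) :
  \sum_x \sum_a F x a = \sum_x \sum_a F (override x a) (restrict S x).
Proof.
rewrite !pair_bigA /= (reindex_involutive
  (fun p : cf * lc => (override p.1 p.2, restrict S p.1)) (fun p => F p.1 p.2)) //.
by case=> x a /=; rewrite override_override override_restrict restrict_override.
Qed.

Lemma sum_override (G : cf -> C) :
  \sum_x \sum_a G (override x a) = #|{: lc}|%:R * \sum_x G x.
Proof.
rewrite (sum_override_swap (fun x a => G (override x a))) mulr_sumr.
apply: eq_bigr => x _; under eq_bigr do rewrite override_override override_restrict.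
by rewrite sumr_const mulr_natl.
Qed.

Lemma embed_apply (hh : lc -> lc -> C) (g : cf -> C) x :
  applyop (embed hh) g x = \sum_b hh (restrict S x) b * g (override x b).
Proof.
rewrite /applyop /embed.
transitivity (\sum_y \sum_b
    (if y == override x b then hh (restrict S x) (restrict S y) * g y else 0)).
  apply: eq_bigr => y _; case: ifP => hxy; last first.
    rewrite mul0r big1 // => b _; case: eqP => // hy.
    move/negP: hxy; case; rewrite hy; apply/forallP => i; apply/implyP => hi.
    by rewrite override_out.
  rewrite (bigD1 (restrict S y)) //= big1 ?addr0.
    suff -> : y == override x (restrict S y) by [].
    apply/eqP/ffunP => i; case: (boolP (i \in S)) => hi.
      by rewrite override_in ffunE.
    by rewrite override_out //; apply/esym/eqP; exact: (implyP ((forallP hxy) i) hi).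
  move=> b hb; case: eqP => // hy; move/eqP: hb; case.
  by rewrite hy restrict_override.
rewrite exchange_big; apply: eq_bigr => b _.
by rewrite -big_mkcond /= big_pred1_eq restrict_override.
Qed.

End Configurations.

Arguments override {n d S}.
Arguments upd {n d}.
Arguments sum_upd_swap {C n d}.

Section Forms.
Variables (C : numClosedFieldType) (n d : nat).
Local Notation cf := (conf n d).
Implicit Types (f g h : cf -> C) (A : cf -> cf -> C).

Lemma dotp_suml (I : finType) (f : I -> cf -> C) g :
  dotp (fun x => \sum_i f i x) g = \sum_i dotp (f i) g.
Proof.
rewrite /dotp exchange_big; apply: eq_bigr => x _.
by rewrite rmorph_sum mulr_suml.
Qed.

Lemma dotp_sumr (I : finType) (f : I -> cf -> C) g :
  dotp g (fun x => \sum_i f i x) = \sum_i dotp g (f i).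
Proof. by rewrite /dotp exchange_big; apply: eq_bigr => x _; rewrite mulr_sumr. Qed.

Lemma applyop_sum (I : finType) A (f : I -> cf -> C) :
  applyop A (fun x => \sum_i f i x) = fun x => \sum_i applyop A (f i) x.
Proof.
apply: functional_extensionality => x; rewrite /applyop exchange_big.
by apply: eq_bigr => y _; rewrite mulr_sumr.
Qed.

Lemma form_sum (I : finType) A (f : I -> cf -> C) :
  dotp (fun x => \sum_i f i x) (applyop A (fun x => \sum_i f i x)) =
  \sum_i \sum_j dotp (f i) (applyop A (f j)).
Proof.
by rewrite applyop_sum dotp_suml; apply: eq_bigr => i _; rewrite dotp_sumr.
Qed.

Lemma dotp_subl f g h : dotp (fun x => f x - g x) h = dotp f h - dotp g h.
Proof. by rewrite /dotp -sumrB; apply: eq_bigr => x _; rewrite rmorphB mulrBl. Qed.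

Lemma dotp_subr f g h : dotp h (fun x => f x - g x) = dotp h f - dotp h g.
Proof. by rewrite /dotp -sumrB; apply: eq_bigr => x _; rewrite mulrBr. Qed.

Lemma applyop_sub A f g :
  applyop A (fun x => f x - g x) = fun x => applyop A f x - applyop A g x.
Proof.
apply: functional_extensionality => x; rewrite /applyop -sumrB.
by apply: eq_bigr => y _; rewrite mulrBr.
Qed.

Lemma dotp_mulr_l f h a : dotp (fun x => f x * a) h = a^* * dotp f h.
Proof.
rewrite /dotp mulr_sumr; apply: eq_bigr => x _.
by rewrite rmorphM /= mulrA [_ * a^*]mulrC.
Qed.

Lemma dotp_mulr_r f h a : dotp h (fun x => f x * a) = dotp h f * a.
Proof. by rewrite /dotp mulr_suml; apply: eq_bigr => x _; rewrite mulrA. Qed.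

Lemma applyop_mulr A f a :
  applyop A (fun x => f x * a) = fun x => applyop A f x * a.
Proof.
apply: functional_extensionality => x; rewrite /applyop mulr_suml.
by apply: eq_bigr => y _; rewrite mulrA.
Qed.

Lemma dotp_ge0 f : 0 <= dotp f f.
Proof. by apply: sumr_ge0 => x _; rewrite mulrC mul_conjC_ge0. Qed.

Lemma dotp_gt0 f : (exists x, f x != 0) -> 0 < dotp f f.
Proof.
case=> x0 hx0; rewrite lt_def dotp_ge0 andbT psumr_eq0; last first.
  by move=> x _; rewrite mulrC mul_conjC_ge0.
apply/allPn; exists x0; first exact: mem_index_enum.
by rewrite mulrC mul_conjC_eq0.
Qed.

Lemma sum_le_card_diag (I : finType) (B : I -> I -> C) :
  (forall i j, B i j + B j i <= B i i + B j j) ->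
  \sum_i \sum_j B i j <= #|I|%:R * \sum_i B i i.
Proof.
move=> hB.
have hsum : \sum_i \sum_j (B i j + B j i) <= \sum_i \sum_j (B i i + B j j).
  by apply: ler_sum => i _; apply: ler_sum => j _; exact: hB.
have eoff : \sum_i \sum_j (B i j + B j i) = 2 * \sum_i \sum_j B i j.
  under eq_bigr do rewrite big_split /=.
  rewrite big_split /= [X in _ + X = _]exchange_big /=.
  by move: (\sum_i \sum_j B i j) => s; ring.
have ediag : \sum_i \sum_j (B i i + B j j) = 2 * (#|I|%:R * \sum_i B i i).
  under eq_bigr do rewrite big_split /= sumr_const.
  rewrite big_split /= sumr_const sumrMnl -mulr_natl.
  by rewrite -mulr_natl; ring.
by rewrite eoff ediag ler_pM2l in hsum.
Qed.

(* The pinching inequality: expanding <y_i - y_j|A|y_i - y_j> >= 0 bounds the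
   cross terms by the diagonal ones. *)
Lemma psd_form_sum_le (I : finType) A (y : I -> cf -> C) :
  (forall f, 0 <= dotp f (applyop A f)) ->
  dotp (fun x => \sum_i y i x) (applyop A (fun x => \sum_i y i x)) <=
  #|I|%:R * \sum_i dotp (y i) (applyop A (y i)).
Proof.
move=> hA; rewrite form_sum; apply: sum_le_card_diag => i j.
have := hA (fun x => y i x - y j x).
rewrite applyop_sub dotp_subl !dotp_subr => hij.
rewrite -subr_ge0; apply: le_trans hij _.
by rewrite le_eqVlt; apply/orP; left; apply/eqP; ring.
Qed.

Lemma embed_form_ge0 (S : {set 'I_n}) (hh : lconf d S -> lconf d S -> C) f :
  (0 < d)%N -> psd hh -> 0 <= dotp f (applyop (embed hh) f).
Proof.
move=> d_gt0 [_ hp].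
have hN : 0 < #|{: lconf d S}|%:R :> C.
  by rewrite ltr0n; apply/card_gt0P; exists [ffun=> Ordinal d_gt0].
rewrite -(pmulr_rge0 _ hN) /dotp -sum_override.
apply: sumr_ge0 => x _; have := hp (fun a => f (override x a)).
congr (0 <= _); apply: eq_bigr => a _.
rewrite embed_apply restrict_override /applyop; congr (_ * _).
by apply: eq_bigr => b _; rewrite override_override.
Qed.

End Forms.
Arguments psd_form_sum_le {C n d I A}.
Arguments form_sum {C n d I}.
Arguments embed_form_ge0 {C n d S hh}.

Section SiteProjection.
Variables (C : numClosedFieldType) (n d : nat) (i0 : 'I_n).
Local Notation cf := (conf n d).
Implicit Types (e : 'I_d -> C) (f g : cf -> C).

(* contract e and proj e are <e| and |e><e| acting on site i0; gram f is the
   reduced density matrix of f on site i0, transposed and scaled by d. *)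
Definition contract e f : cf -> C := fun x => \sum_a (e a)^* * f (upd i0 x a).

Definition proj e f : cf -> C := fun x => e (x i0) * contract e f x.

Definition gram f (a a' : 'I_d) : C := \sum_x (f (upd i0 x a))^* * f (upd i0 x a').

Lemma gram_adjoint f a a' : gram f a' a = (gram f a a')^*.
Proof.
by rewrite /gram rmorph_sum /=; apply: eq_bigr => x _; rewrite conjC_mulCl mulrC.
Qed.

Lemma contract_mull e g f x : (forall a, g (upd i0 x a) = g x) ->
  contract e (fun y => g y * f y) x = g x * contract e f x.
Proof.
move=> hg; rewrite /contract mulr_sumr; apply: eq_bigr => a _.
by rewrite hg mulrCA.
Qed.

Lemma dotp_contract e e' f :
  dotp (contract e f) (contract e' f) = \sum_a \sum_a' e a * gram f a a' * (e' a')^*.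
Proof.
rewrite /dotp /contract.
transitivity (\sum_x \sum_a \sum_a'
    e a * ((f (upd i0 x a))^* * f (upd i0 x a')) * (e' a')^*).
  apply: eq_bigr => x _; rewrite rmorph_sum /= mulr_suml; apply: eq_bigr => a _.
  by rewrite conjC_mulCl mulr_sumr; apply: eq_bigr => a' _; ring.
rewrite exchange_big; apply: eq_bigr => a _.
rewrite exchange_big; apply: eq_bigr => a' _.
by rewrite /gram mulr_sumr mulr_suml.
Qed.

Variable U : 'I_d -> 'I_d -> C.
Hypothesis U_orth : forall b b', \sum_a (U b a)^* * U b' a = (b == b')%:R.
Hypothesis U_complete : forall a c, \sum_b U b c * (U b a)^* = (c == a)%:R.

Lemma proj_sum f : f = fun x => \sum_b proj (U b) f x.
Proof.
apply: functional_extensionality => x; rewrite /proj /contract.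
under eq_bigr do rewrite mulr_sumr.
rewrite exchange_big /=.
under eq_bigr => a _.
  under eq_bigr do rewrite mulrA.
  rewrite -mulr_suml U_complete.
  over.
rewrite (bigD1 (x i0)) //= eqxx mul1r upd_id big1 ?addr0 // => a ha.
by rewrite eq_sym (negbTE ha) mul0r.
Qed.

Lemma proj_proj b b' f x :
  proj (U b) (proj (U b') f) x = if b == b' then proj (U b) f x else 0.
Proof.
rewrite /proj /contract.
under eq_bigr do rewrite upd_same.
under eq_bigr => a _.
  under eq_bigr do rewrite upd_upd.
  over.
under eq_bigr do rewrite mulrA.
rewrite -mulr_suml U_orth.
by case: eqP => [-> | _]; rewrite ?mul1r // mul0r mulr0.
Qed.

Lemma proj_adjoint e f g : dotp (proj e f) g = dotp f (proj e g).
Proof.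
rewrite /dotp /proj /contract.
under eq_bigr => x _.
  rewrite rmorphM rmorph_sum /= mulr_sumr mulr_suml.
  over.
under [RHS]eq_bigr do rewrite !mulr_sumr.
rewrite (sum_upd_swap i0); apply: eq_bigr => x _; apply: eq_bigr => a _.
by rewrite upd_upd upd_id upd_same conjC_mulCl; ring.
Qed.

Lemma dotp_proj_sum f g : \sum_b dotp (proj (U b) f) (proj (U b) g) = dotp f g.
Proof.
under eq_bigr => b _.
  rewrite proj_adjoint.
  have -> : proj (U b) (proj (U b) g) = proj (U b) g.
    by apply: functional_extensionality => x; rewrite proj_proj eqxx.
  over.
by rewrite -dotp_sumr -proj_sum.
Qed.

Lemma embed_proj (S : {set 'I_n}) (hh : lconf d S -> lconf d S -> C) e f :
  i0 \notin S -> applyop (embed hh) (proj e f) = proj e (applyop (embed hh) f).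
Proof.
move=> hS; apply: functional_extensionality => x.
have hi0 y (b : lconf d S) : override y b i0 = y i0 by rewrite override_out.
have hupd y (b : lconf d S) a : upd i0 (override y b) a = override (upd i0 y a) b.
  apply/ffunP => i; case: (boolP (i \in S)) => hi.
    have hne : i != i0 by apply: contraNneq hS => <-.
    by rewrite upd_other // !override_in.
  rewrite [RHS]override_out // [LHS]ffunE [RHS]ffunE.
  by case: eqP => // _; rewrite override_out.
have hres a : restrict S (upd i0 x a) = restrict S x.
  apply/ffunP => [[i hi]]; rewrite !ffunE /=.
  by have -> : (i == i0) = false by apply/negbTE; apply: contraNneq hS => <-.
rewrite embed_apply /proj /contract.
transitivity (\sum_b \sum_a hh (restrict S x) b *
    (e (x i0) * ((e a)^* * f (override (upd i0 x a) b)))).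
  apply: eq_bigr => b _; rewrite hi0 mulr_sumr mulr_sumr.
  by apply: eq_bigr => a _; rewrite hupd.
rewrite exchange_big mulr_sumr; apply: eq_bigr => a _.
by rewrite embed_apply hres !mulr_sumr; apply: eq_bigr => b _; ring.
Qed.

Lemma form_proj_sum_commute (S : {set 'I_n}) (hh : lconf d S -> lconf d S -> C) f :
  i0 \notin S ->
  \sum_b dotp (proj (U b) f) (applyop (embed hh) (proj (U b) f)) =
  dotp f (applyop (embed hh) f).
Proof.
by move=> hS; under eq_bigr do rewrite embed_proj //; exact: dotp_proj_sum.
Qed.

Lemma form_le_proj_sum A f : (forall g, 0 <= dotp g (applyop A g)) ->
  dotp f (applyop A f) <= d%:R * \sum_b dotp (proj (U b) f) (applyop A (proj (U b) f)).
Proof.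
move=> hA; have := psd_form_sum_le (fun b => proj (U b) f) hA.
by rewrite -proj_sum card_ord.
Qed.

Lemma form_proj_sum_diag A f :
  (forall b b', b != b' -> dotp (proj (U b) f) (applyop A (proj (U b') f)) = 0) ->
  \sum_b dotp (proj (U b) f) (applyop A (proj (U b) f)) = dotp f (applyop A f).
Proof.
move=> hoff; have := form_sum A (fun b => proj (U b) f); rewrite -proj_sum => ->.
apply: eq_bigr => b _; rewrite (bigD1 b) //= big1 ?addr0 // => b' hb'.
by apply: hoff; rewrite eq_sym.
Qed.

End SiteProjection.
Arguments contract {C n d}.
Arguments proj {C n d}.
Arguments gram {C n d}.
Arguments dotp_contract {C n d}.
Arguments dotp_proj_sum {C n d}.
Arguments form_proj_sum_commute {C n d}.
Arguments form_le_proj_sum {C n d}.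
Arguments form_proj_sum_diag {C n d}.
Arguments gram_adjoint {C n d}.

Section ProductPrefix.
Variables (C : numClosedFieldType) (n d : nat).
Local Notation cf := (conf n d).
Implicit Types (m : nat) (u : 'I_n -> 'I_d -> C) (w : cf -> C) (x y : cf).

Definition partial_prod m u (x : cf) : C := \prod_(i : 'I_n | (i < m)%N) u i (x i).

Definition prefix_tensor m u w : cf -> C := fun x => partial_prod m u x * w x.

Definition tail_dependent m w :=
  forall x y : cf, (forall i : 'I_n, (m <= i)%N -> x i = y i) -> w x = w y.

Lemma partial_prod_eq m u x y : (forall i : 'I_n, (i < m)%N -> x i = y i) ->
  partial_prod m u x = partial_prod m u y.
Proof. by move=> hxy; apply: eq_bigr => i hi; rewrite hxy. Qed.

Lemma partial_prod_upd (i0 : 'I_n) u x a :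
  partial_prod i0 u (upd i0 x a) = partial_prod i0 u x.
Proof.
apply: partial_prod_eq => i hi; rewrite upd_other //.
by apply: contraTneq hi => ->; rewrite ltnn.
Qed.

Lemma partial_prod_succ (i0 : 'I_n) u e x :
  partial_prod i0.+1 (fun i => if i == i0 then e else u i) x =
  partial_prod i0 u x * e (x i0).
Proof.
rewrite /partial_prod (bigD1 i0) //= eqxx mulrC; congr (_ * _).
apply: eq_big => i; last by case/andP => _ /negbTE ->.
by rewrite ltnS -val_eqE; case: ltngtP.
Qed.

Lemma partial_prod_all u x : partial_prod n u x = prodstate u x.
Proof. by apply: eq_bigl => i; rewrite ltn_ord. Qed.

Lemma partial_prod0 u x : partial_prod 0 u x = 1.
Proof. exact: big_pred0. Qed.

Variable i0 : 'I_n.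

(* glue exchanges the sites <= i0 of two configurations: an involution on
   pairs that splits the sum. *)
Definition glue (x y : cf) : cf := [ffun i : 'I_n => if (i <= i0)%N then x i else y i].

Lemma sum_mul_separated (K L : cf -> C) :
  (forall x y, (forall i : 'I_n, (i <= i0)%N -> x i = y i) -> K x = K y) ->
  (forall x y, (forall i : 'I_n, (i0 < i)%N -> x i = y i) -> L x = L y) ->
  (\sum_x K x * L x) *+ #|{: cf}| = (\sum_x K x) * (\sum_y L y).
Proof.
move=> hK hL; rewrite mulr_suml; under [RHS]eq_bigr do rewrite mulr_sumr.
rewrite pair_bigA /= (reindex_involutive
  (fun p : cf * cf => (glue p.1 p.2, glue p.2 p.1)) (fun p => K p.1 * L p.2)).
  rewrite -(pair_bigA _ (fun x y => K (glue x y) * L (glue y x))) /= -sumrMnl.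
  apply: eq_bigr => x _; rewrite -sumr_const; apply: eq_bigr => y _.
  congr (_ * _); apply/esym.
    by apply: hK => i hi; rewrite ffunE hi.
  by apply: hL => i hi; rewrite ffunE leqNgt hi.
have glueK x y : glue (glue x y) (glue y x) = x.
  by apply/ffunP => i; rewrite !ffunE; case: (i <= i0)%N.
by case=> x y /=; rewrite !glueK.
Qed.

End ProductPrefix.
Arguments partial_prod {C n d}.
Arguments prefix_tensor {C n d}.
Arguments tail_dependent {C n d}.
Arguments sum_mul_separated {C n d}.
Arguments partial_prod_upd {C n d}.
Arguments partial_prod_succ {C n d}.

(* For S inside [0, i0] the matrix element of embed hh between two slices
   factorises into a part on the sites <= i0 and the inner product of the
   parts [contract (U b) w] on the sites > i0, which vanishes for b != b'. *)
Section CrossTerms.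
Variables (C : numClosedFieldType) (n d : nat) (i0 : 'I_n).
Local Notation cf := (conf n d).
Variables (u : 'I_n -> 'I_d -> C) (w : cf -> C).
Variables (S : {set 'I_n}) (hh : lconf d S -> lconf d S -> C).
Implicit Types (x y : cf) (b : 'I_d).
Hypothesis w_tail : tail_dependent i0 w.
Hypothesis S_head : forall s, s \in S -> (s <= i0)%N.
Variable U : 'I_d -> 'I_d -> C.
Hypothesis U_diag : forall b b', b != b' ->
  \sum_a \sum_a' U b a * gram i0 w a a' * (U b' a')^* = 0.

Let head_part (b : 'I_d) (x : cf) := partial_prod i0 u x * U b (x i0).

Lemma proj_prefix_tensor_head b :
  proj i0 (U b) (prefix_tensor i0 u w) =
  fun x => head_part b x * contract i0 (U b) w x.
Proof.
apply: functional_extensionality => x; rewrite /proj contract_mull.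
  by rewrite mulrCA mulrA.
by move=> a; rewrite partial_prod_upd.
Qed.

Lemma head_part_eq b x y : (forall i : 'I_n, (i <= i0)%N -> x i = y i) ->
  head_part b x = head_part b y.
Proof.
move=> hxy; rewrite /head_part hxy //.
by rewrite (@partial_prod_eq _ _ _ i0 u x y) // => i /ltnW /hxy.
Qed.

Lemma embed_head_part_eq b x y : (forall i : 'I_n, (i <= i0)%N -> x i = y i) ->
  applyop (embed hh) (head_part b) x = applyop (embed hh) (head_part b) y.
Proof.
move=> hxy; rewrite !embed_apply.
have -> : restrict S x = restrict S y.
  by apply/ffunP => j; rewrite !ffunE; apply/hxy/S_head/(valP j).
apply: eq_bigr => be _; congr (_ * _); apply: head_part_eq => i hi.
case: (boolP (i \in S)) => hin; first by rewrite !override_in.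
by rewrite !override_out // hxy.
Qed.

Lemma contract_eq b x y : (forall i : 'I_n, (i0 < i)%N -> x i = y i) ->
  contract i0 (U b) w x = contract i0 (U b) w y.
Proof.
move=> hxy; apply: eq_bigr => a _; congr (_ * _); apply: w_tail => i hi.
have [->|hne] := eqVneq i i0; first by rewrite !upd_same.
rewrite !upd_other //; apply: hxy; rewrite ltn_neqAle hi andbT.
by rewrite eq_sym val_eqE.
Qed.

Lemma contract_override b x (be : lconf d S) :
  contract i0 (U b) w (override x be) = contract i0 (U b) w x.
Proof.
apply: contract_eq => i hi; rewrite override_out //.
by apply/negP => /S_head; rewrite leqNgt hi.
Qed.

Lemma embed_prefix_tensor_head b x :
  applyop (embed hh) (fun y => head_part b y * contract i0 (U b) w y) x =
  contract i0 (U b) w x * applyop (embed hh) (head_part b) x.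
Proof.
rewrite !embed_apply mulr_sumr; apply: eq_bigr => be _.
by rewrite contract_override mulrA mulrC.
Qed.

Lemma cross_form_proj0 b b' : b != b' ->
  dotp (proj i0 (U b) (prefix_tensor i0 u w))
    (applyop (embed hh) (proj i0 (U b') (prefix_tensor i0 u w))) = 0.
Proof.
move=> hb; rewrite !proj_prefix_tensor_head /dotp.
rewrite (eq_bigr (fun x =>
    ((head_part b x)^* * applyop (embed hh) (head_part b') x) *
    ((contract i0 (U b) w x)^* * contract i0 (U b') w x))); last first.
  by move=> x _; rewrite embed_prefix_tensor_head rmorphM; ring.
set X := \sum_x _.
have : X *+ #|{: cf}| = 0.
  rewrite (sum_mul_separated i0).
  - have := dotp_contract i0 (U b) (U b') w.
    by rewrite U_diag // /dotp => ->; rewrite mulr0.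
  - by move=> x y hxy; rewrite (head_part_eq b _ _ hxy) (embed_head_part_eq b' _ _ hxy).
  - by move=> x y hxy; rewrite (contract_eq b _ _ hxy) (contract_eq b' _ _ hxy).
have cf_gt0 : (0 < #|{: cf}|)%N by apply/card_gt0P; exists [ffun=> b].
by move/eqP; rewrite mulrn_eq0 eqn0Ngt cf_gt0 => /eqP.
Qed.

End CrossTerms.
Arguments cross_form_proj0 {C n d} i0 {u w S hh}.

Lemma hermitian_eigenbasis {C : numClosedFieldType} {d : nat} (M : 'I_d -> 'I_d -> C) :
  (forall a a', M a' a = (M a a')^*) ->
  exists U : 'I_d -> 'I_d -> C,
    [/\ forall b b', \sum_a (U b a)^* * U b' a = (b == b')%:R,
        forall a c, \sum_b U b c * (U b a)^* = (c == a)%:R &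
        forall b b', b != b' -> \sum_a \sum_a' U b a * M a a' * (U b' a')^* = 0].
Proof.
Local Open Scope sesquilinear_scope.
move=> hM; pose A : 'M[C]_d := \matrix_(a, a') M a a'.
have A_normal : A \is normalmx.
  suff hA : A^t* = A by apply/normalmxP; rewrite hA.
  by apply/matrixP => i j; rewrite !mxE (hM j i).
pose P := spectralmx A.
have P_unitary : P \is unitarymx := spectral_unitarymx A.
have PPt : P *m P^t* = 1%:M by apply/unitarymxP.
have PtP : P^t* *m P = 1%:M.
  by rewrite -invmx_unitary // mulVmx // unitarymx_unit.
have P_diag : P *m A *m P^t* = diag_mx (spectral_diag A).
  rewrite {1}(orthomx_spectralP A_normal) invmx_unitary // !mulmxA PPt mul1mx.
  by rewrite -mulmxA PPt mulmx1.
exists (fun b a => P b a); split.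
- move=> b b'; have := congr1 (fun X : 'M[C]_d => X b' b) PPt.
  rewrite /= !mxE eq_sym => <-.
  by apply: eq_bigr => a _; rewrite !mxE mulrC.
- move=> a c; have := congr1 (fun X : 'M[C]_d => X a c) PtP.
  rewrite /= !mxE eq_sym => <-.
  by apply: eq_bigr => b _; rewrite !mxE mulrC.
- move=> b b' hb; have := congr1 (fun X : 'M[C]_d => X b b') P_diag.
  rewrite [in X in _ = X -> _]mxE (negbTE hb) mulr0n => /(eq_trans _); apply.
  rewrite mxE exchange_big /=; apply: eq_bigr => a' _.
  by rewrite !mxE mulr_suml; apply: eq_bigr => a _; rewrite !mxE.
Qed.

Lemma exists_argmax_real {C : numClosedFieldType} {T : finType} (t0 : T) (f : T -> C) :
  (forall t, f t \is Num.real) -> exists t1, forall t, f t <= f t1.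
Proof.
move=> hr; suff [t1 ht1] : exists t1, forall t, t \in enum T -> f t <= f t1.
  by exists t1 => t; apply: ht1; rewrite mem_enum.
elim: (enum T) => [|t s [t1 ht1]]; first by exists t0.
case/orP: (real_leVge (hr t) (hr t1)) => [le_t_t1|le_t1_t].
- by exists t1 => x; rewrite inE => /predU1P[->|/ht1].
- exists t => x; rewrite inE => /predU1P[->|/ht1 hx] //.
  exact: le_trans hx le_t1_t.
Qed.

Section ProductStateBound.
Variables (C : numClosedFieldType) (n k d : nat).
Variable h : forall S : {set 'I_n}, lconf d S -> lconf d S -> C.
Hypothesis d_gt0 : (0 < d)%N.
Hypothesis h_psd : forall S : {set 'I_n}, #|S| == k -> psd (h S).
Local Notation cf := (conf n d).
Implicit Types (S : {set 'I_n}) (f : cf -> C) (phi u : 'I_n -> 'I_d -> C).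

Definition energy S f := dotp f (applyop (embed (h S)) f).

Definition product_energy phi :=
  dotp (prodstate phi) (applyop (kham k h) (prodstate phi)).

Definition unit_vectors phi := forall i, dotp (phi i) (phi i) = 1.

Definition tail (m : nat) S := [set s in S | (m <= s)%N].

(* By truncated subtraction the weight is 1 as soon as S has at most one site
   in [m, n); it is d^-(k-1) for m = 0. *)
Definition weight (m : nat) S : C := ((d ^ (#|tail m S| - 1))%N%:R)^-1.

Definition weighted_energy (m : nat) f :=
  \sum_(S : {set 'I_n} | #|S| == k) weight m S * energy S f.

Definition product_state_bound (m : nat) :=
  forall u (w : cf -> C), unit_vectors u -> tail_dependent m w ->
  exists phi, unit_vectors phi /\
    weighted_energy m (prefix_tensor m u w) <=
    dotp (prefix_tensor m u w) (prefix_tensor m u w) * product_energy phi.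

Lemma kham_form f :
  dotp f (applyop (kham k h) f) = \sum_(S : {set 'I_n} | #|S| == k) energy S f.
Proof.
rewrite /energy /dotp /applyop /kham exchange_big /=; apply: eq_bigr => x _.
rewrite -mulr_sumr; congr (_ * _).
by under eq_bigr do rewrite mulr_suml; rewrite exchange_big.
Qed.

Lemma energy_ge0 S f : #|S| == k -> 0 <= energy S f.
Proof. by move=> hS; apply: embed_form_ge0 => //; apply: h_psd. Qed.

Lemma product_energy_ge0 phi : 0 <= product_energy phi.
Proof.
by rewrite /product_energy kham_form; apply: sumr_ge0 => S; apply: energy_ge0.
Qed.

Lemma dotp_prodstate u : unit_vectors u -> dotp (prodstate u) (prodstate u) = 1.
Proof.
move=> hu; rewrite /dotp /prodstate.
under eq_bigr do rewrite rmorph_prod -big_split /=.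
rewrite -(bigA_distr_bigA (fun i a => (u i a)^* * u i a)) /=.
by apply: big1 => i _; apply: hu.
Qed.

Lemma product_state_bound_n : product_state_bound n.
Proof.
move=> u w hu hw; exists u; split => //.
pose c := w [ffun=> Ordinal d_gt0].
have -> : prefix_tensor n u w = fun x => prodstate u x * c.
  apply: functional_extensionality => x; rewrite /prefix_tensor partial_prod_all /c.
  by congr (_ * _); apply: hw => i; rewrite leqNgt ltn_ord.
rewrite dotp_mulr_l dotp_mulr_r dotp_prodstate // /weighted_energy.
rewrite /product_energy kham_form mulr_sumr; apply: ler_sum => S _.
have -> : weight n S = 1.
  rewrite /weight.
  have -> : tail n S = set0 by apply/setP => s; rewrite !inE leqNgt ltn_ord andbF.
  by rewrite cards0 expn0 invr1.
by rewrite /energy applyop_mulr dotp_mulr_l dotp_mulr_r !mul1r mulrA mulrAC.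
Qed.

Section Step.
Variables (m : nat) (m_lt_n : (m < n)%N).
Variables (u : 'I_n -> 'I_d -> C) (w : cf -> C).
Hypotheses (u_unit : unit_vectors u) (w_tail : tail_dependent m w).
Let i0 : 'I_n := Ordinal m_lt_n.
Variable U : 'I_d -> 'I_d -> C.
Hypothesis U_orth : forall b b', \sum_a (U b a)^* * U b' a = (b == b')%:R.
Hypothesis U_complete : forall a c, \sum_b U b c * (U b a)^* = (c == a)%:R.
Hypothesis U_diag : forall b b', b != b' ->
  \sum_a \sum_a' U b a * gram i0 w a a' * (U b' a')^* = 0.

Let v := prefix_tensor m u w.
Let u_succ b i := if i == i0 then U b else u i.
Let w_succ b := contract i0 (U b) w.

Lemma proj_prefix_tensor b : proj i0 (U b) v = prefix_tensor m.+1 (u_succ b) (w_succ b).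
Proof.
apply: functional_extensionality => x.
rewrite /proj contract_mull; last by move=> a; exact: (partial_prod_upd i0).
by rewrite /prefix_tensor (partial_prod_succ i0) mulrCA mulrA.
Qed.

Lemma unit_vectors_succ b : unit_vectors (u_succ b).
Proof. by move=> i; rewrite /u_succ; case: eqP => _; rewrite // /dotp U_orth eqxx. Qed.

Lemma tail_dependent_contract b : tail_dependent m.+1 (w_succ b).
Proof.
move=> x y hxy; apply: eq_bigr => a _; congr (_ * _); apply: w_tail => i hi.
have [->|hne] := eqVneq i i0; first by rewrite !upd_same.
rewrite !upd_other //; apply: hxy; rewrite ltn_neqAle hi andbT eq_sym.
by move: hne; rewrite -val_eqE.
Qed.

Lemma card_tail_succ S : #|tail m S| = ((i0 \in S) + #|tail m.+1 S|)%N.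
Proof.
have -> : tail m.+1 S = tail m S :\ i0.
  apply/setP => s; rewrite !inE; have [->|hne] := eqVneq s i0.
    by rewrite ltnn andbF.
  suff hms : m != s by rewrite ltn_neqAle hms.
  by apply: contraNneq hne => ms; apply/eqP/val_inj; rewrite /= -ms.
by rewrite (cardsD1 i0) !inE leqnn andbT.
Qed.

Lemma energy_site_le S : #|S| == k ->
  weight m S * energy S v <= weight m.+1 S * \sum_b energy S (proj i0 (U b) v).
Proof.
move=> hS; rewrite /weight card_tail_succ.
have [i0S|i0S] := boolP (i0 \in S); last first.
  by rewrite add0n /energy (form_proj_sum_commute i0 _ U_orth U_complete).
have [tail0|tail_gt0] := posnP #|tail m.+1 S|.
  rewrite tail0 expn0 invr1 !mul1r /energy (form_proj_sum_diag i0 _ U_complete) //.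
  move=> b b' hb; apply: (cross_form_proj0 i0 w_tail _ _ U_diag _ _ hb) => s sS.
  rewrite leqNgt; apply/negP => lt_i0_s.
  by move/eqP: tail0; rewrite cards_eq0 => /eqP/setP/(_ s); rewrite !inE sS lt_i0_s.
move: tail_gt0; case: #|tail m.+1 S| => // t _.
rewrite add1n !subn1 /= expnS natrM invfM -mulrA mulrCA.
apply: ler_wpM2l; first by rewrite invr_ge0 ler0n.
rewrite ler_pdivrMl ?ltr0n //.
apply: (form_le_proj_sum i0 _ U_complete) => g.
exact: embed_form_ge0 g d_gt0 (h_psd S hS).
Qed.

Lemma weighted_energy_le_proj :
  weighted_energy m v <= \sum_b weighted_energy m.+1 (proj i0 (U b) v).
Proof.
rewrite /weighted_energy [leRHS]exchange_big /=; apply: ler_sum => S hS.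
by rewrite -mulr_sumr; apply: energy_site_le.
Qed.

End Step.

Lemma product_state_bound_step m : (m < n)%N ->
  product_state_bound m.+1 -> product_state_bound m.
Proof.
move=> m_lt_n IH u w u_unit w_tail; pose i0 : 'I_n := Ordinal m_lt_n.
have [U [U_orth U_complete U_diag]] := hermitian_eigenbasis _ (gram_adjoint i0 w).
have IHb b : exists phi, unit_vectors phi /\
    weighted_energy m.+1 (proj i0 (U b) (prefix_tensor m u w)) <=
    dotp (proj i0 (U b) (prefix_tensor m u w)) (proj i0 (U b) (prefix_tensor m u w)) *
    product_energy phi.
  rewrite proj_prefix_tensor; apply: IH.
    exact: unit_vectors_succ.
  exact: tail_dependent_contract.
have [Phi hPhi] := fin_all_exists IHb.
have [b1 b1_max] := exists_argmax_real (Ordinal d_gt0)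
  (fun b => product_energy (Phi b)) (fun b => ger0_real (product_energy_ge0 _)).
exists (Phi b1); split; first by case: (hPhi b1).
apply: le_trans
  (weighted_energy_le_proj _ m_lt_n _ _ w_tail _ U_orth U_complete U_diag) _.
rewrite -(dotp_proj_sum i0 U U_orth U_complete) mulr_suml; apply: ler_sum => b _.
apply: le_trans (proj2 (hPhi b)) _.
by apply: ler_wpM2l; [exact: dotp_ge0 | exact: b1_max].
Qed.

Lemma product_state_bound0 : product_state_bound 0.
Proof.
suff bound_from j : (j <= n)%N -> product_state_bound (n - j).
  by rewrite -(subnn n); apply: bound_from.
elim: j => [|j IH] hj; first by rewrite subn0; exact: product_state_bound_n.
apply: product_state_bound_step; first by rewrite ltn_subrL (leq_trans _ hj).
by rewrite subnSK //; apply/IH/ltnW.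
Qed.

Lemma eigenvalue_le_product_energy lam : Defs.eigenvalue (kham k h) lam ->
  exists phi, unit_vectors phi /\ lam / (d ^ (k - 1))%N%:R <= product_energy phi.
Proof.
case=> v [v_nz v_eig].
pose e0 (i : 'I_n) (a : 'I_d) : C := (a == Ordinal d_gt0)%:R.
have e0_unit : unit_vectors e0.
  move=> i; rewrite /dotp (bigD1 (Ordinal d_gt0)) //= big1 ?addr0.
    by rewrite /e0 eqxx rmorph1 mulr1.
  by move=> a ha; rewrite /e0 (negbTE ha) mulr0.
have v_tail : tail_dependent 0 v.
  by move=> x y hxy; congr v; apply/ffunP => i; apply: hxy.
have [phi [phi_unit]] := product_state_bound0 _ _ e0_unit v_tail.
have -> : prefix_tensor 0 e0 v = v.
  by apply: functional_extensionality => x; rewrite /prefix_tensor partial_prod0 mul1r.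
have -> : weighted_energy 0 v = dotp v v * (lam / (d ^ (k - 1))%N%:R).
  have tail0 S : tail 0 S = S by apply/setP => s; rewrite inE andbT.
  rewrite /weighted_energy; under eq_bigr => S /eqP hS do rewrite /weight tail0 hS.
  rewrite -mulr_sumr -kham_form.
  have -> : applyop (kham k h) v = fun x => v x * lam.
    by apply: functional_extensionality => x; rewrite v_eig mulrC.
  by rewrite dotp_mulr_r mulrCA [_^-1 * lam]mulrC.
by rewrite ler_pM2l ?dotp_gt0 //; exists phi.
Qed.

End ProductStateBound.
Arguments eigenvalue_le_product_energy {C n k d h}.

Theorem theorem1 (C : numClosedFieldType) (n k d : nat)
  (hk : (1 <= k)%N) (hd : (1 <= d)%N) (hkn : (k <= n)%N)
  (h : forall S : {set 'I_n}, lconf d S -> lconf d S -> C)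
  (hloc : forall S : {set 'I_n}, #|S| = k -> psd (h S) /\ opnorm_le1 (h S))
  (OPT : C) (hOPT : is_lambda_max (kham k h) OPT) :
  exists phi : 'I_n -> 'I_d -> C,
    (forall i : 'I_n, dotp (phi i) (phi i) = 1) /\
    OPT / ((d ^ (k - 1))%N)%:R <= dotp (prodstate phi) (applyop (kham k h) (prodstate phi)).
Proof.
have h_psd (S : {set 'I_n}) : #|S| == k -> psd (h S) by move=> /eqP /hloc [].
by case: hOPT => /(eigenvalue_le_product_energy hd h_psd).
Qed.
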